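(* There are infinitely many primes $p$ such that there exists a perfect $B[-1,3](p)$ set.
   Context: For a prime $p$, a set $B\subseteq\mathbb{Z}_p$ is a perfect $B[-1,3](p)$ set if every nonzero element of $\mathbb{Z}_p$ has a unique representation $ab \bmod p$ with $a\in\{-1,1,2,3\}$ and $b\in B$ (and $0$ has no such representation); equivalently $B\subseteq\mathbb{Z}_p^\ast$, $|B|=(p-1)/4$, and the sets $\{-b,b,2b,3b\}$, $b\in B$, partition $\mathbb{Z}_p^\ast=\mathbb{Z}_p\setminus\{0\}$. *)

From HB Require Import structures.
From mathcomp Require Import all_boot all_order all_algebra.
Set Implicit Arguments. Unset Strict Implicit. Unset Printing Implicit Defensive.
Import GRing.Theory.
Local Open Scope ring_scope.

Definition mult_coef (i : 'I_4) : int :=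
  match val i with 0%N => -1 | 1%N => 1 | 2%N => 2 | _ => 3 end.

Definition nrep (p : nat) (B : {set 'F_p}) (x : 'F_p) : nat :=
  #|[set ib : 'I_4 * 'F_p | (ib.2 \in B) && ((mult_coef ib.1)%:~R * ib.2 == x)]|.

Definition perfect_Bm13 (p : nat) (B : {set 'F_p}) : Prop :=
  (forall x : 'F_p, x != 0 -> nrep B x = 1%N) /\ nrep B 0 = 0%N.

(* Let q = 8k + 5 be a prime and e = 2k + 1, so that y |-> y ^+ e is the
   quartic character of 'F_q^*.  Its values on -1, 1, 2, 3 are -1, 1, eps, -eps
   with eps = 2 ^+ e of order 4 (2 is a non-residue), provided 6 = 2 * 3 is a
   fourth power.  The four multipliers then lie in distinct cosets of the
   kernel B of the character, so B is a perfect B[-1,3](q) set.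

   To find infinitely many such q we use the quartic f = U^2 - 6 V^2, the norm
   of U + V sqrt 6: if f has a root modulo a prime q > 71, explicit algebra in
   'F_q shows that -1 is a square and 6 is a fourth power mod q.  By Euclid's
   argument, at x = f(0)^2 K^2 with K = 1 * 3 * ... * (2M - 1), f(x) equals
   f(0) * 128 * P with P = 5 mod 8 and P coprime to K.  Every prime factor of
   P is then >= 2M and 1 mod 4, so one of them is 5 mod 8. *)

From Stdlib Require Import ZArith Lia.
From mathcomp Require Import all_boot all_order all_algebra all_field.
From mathcomp Require Import ring zify ssrZ.
Set Implicit Arguments. Unset Strict Implicit. Unset Printing Implicit Defensive.
Import GRing.Theory.

Definition odd_prod (M : nat) : nat := \prod_(i < M) (2 * i + 1).

Lemma odd_prod_odd (M : nat) : odd (odd_prod M).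
Proof.
rewrite /odd_prod; elim/big_ind: _ => //= [m n om on | i _].
  by rewrite oddM om on.
by rewrite oddD oddM.
Qed.

Lemma dvdn_odd_prod (M q : nat) : odd q -> q < 2 * M -> q %| odd_prod M.
Proof.
move=> oq ltqM; have ltq2 : q./2 < M by move: ltqM; rewrite -{1}(odd_double_half q) oq; lia.
rewrite /odd_prod (bigD1 (Ordinal ltq2)) //= dvdn_mulr //.
by rewrite -{1}(odd_double_half q) oq -mul2n addnC.
Qed.

Lemma coprime_of_affine (a b c d : nat) : a * b = 1 + c * d -> coprime b c.
Proof.
move=> E; rewrite /coprime -dvdn1.
have : gcdn b c %| 1 + c * d by rewrite -E dvdn_mull ?dvdn_gcdl.
by rewrite dvdn_addl // dvdn_mulr ?dvdn_gcdr.
Qed.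

Lemma mod8_prime_divisors (n : nat) : 0 < n ->
  (forall p, prime p -> p %| n -> p %% 8 = 1) -> n %% 8 = 1.
Proof.
move=> n0 all1mod8; rewrite (prod_prime_decomp n0) big_seq.
elim/big_ind: _ => [//|a b ha hb|[p e] /mem_prime_decomp[pp e0 dvp] /=].
  by rewrite -modnMm ha hb.
rewrite -modnXm (all1mod8 p pp) ?exp1n //.
exact: dvdn_trans (dvdn_exp e0 (dvdnn p)) dvp.
Qed.

Lemma prime_divisor_5mod8 (n : nat) : n %% 8 = 5 ->
  (forall p, prime p -> p %| n -> p %% 4 = 1) ->
  exists p, [/\ prime p, p %| n & p %% 8 = 5].
Proof.
move=> n5 all1mod4; have n0 : 0 < n by case: (posnP n) n5 => [->|].
have [/hasP[p] | /hasPn no5mod8] := boolP (has (fun p => p %% 8 == 5) (primes n)).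
  by rewrite mem_primes n0 => /andP[pp dvp] /eqP p5; exists p.
suff : n %% 8 = 1 by rewrite n5.
apply: mod8_prime_divisors => // p pp dvp.
have := all1mod4 p pp dvp; have := no5mod8 p; rewrite mem_primes pp n0 dvp => /(_ isT).
lia.
Qed.

Local Open Scope ring_scope.

Lemma Fp_nat_neq0 (p n : nat) : prime p -> (0 < n < p)%N -> n%:R != 0 :> 'F_p.
Proof.
move=> pp /andP[n0 np]; rewrite -(dvdn_pcharf (pchar_Fp pp)).
by apply/negP => /(dvdn_leq n0); rewrite leqNgt np.
Qed.

(* An odd prime p for which -1 is a square in 'F_p is 1 mod 4: otherwise
   p - 1 = 2 * odd and Fermat gives 1 = j ^+ (p - 1) = -1. *)
Lemma sqrt_neg1_mod4 (p : nat) (j : 'F_p) :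
  prime p -> odd p -> j ^+ 2 = -1 -> (p %% 4 = 1)%N.
Proof.
move=> pp op hj; have j0 : j != 0.
  by apply: contra_eq_neq hj => ->; rewrite expr0n eq_sym oppr_eq0 oner_neq0.
have [//|p3] : (p %% 4 = 1 \/ p %% 4 = 3)%N.
  by have := odd_double_half p; rewrite op; lia.
have card_p : #|'F_p| = (2 * (2 * (p %/ 4) + 1)).+1%N by rewrite card_Fp //; lia.
have := expf_card j; rewrite card_p exprS exprM hj -signr_odd oddD oddM /= expr1.
rewrite mulrN1 => /eqP; rewrite eq_sym -subr_eq0 opprK -mulr2n -mulr_natr.
rewrite mulf_eq0 (negbTE j0) /= (negbTE (Fp_nat_neq0 pp _)) //.
by have := odd_prime_gt2 op pp; lia.
Qed.

Lemma uniq_fourth_roots (F : fieldType) (eps : F) :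
  2 != 0 :> F -> eps ^+ 2 = -1 -> uniq [:: -1; 1; eps; - eps].
Proof.
move=> two0 heps.
have one_neq : (1 : F) != -1.
  by rewrite -subr_eq0 opprK -(natrD _ 1 1).
have not_unit (s : F) : s ^+ 2 = -1 -> (s != 1) && (s != -1).
  by move=> hs; apply/andP; split; apply: contra_eq_neq hs => ->;
    rewrite ?sqrrN expr1n.
have eps0 : eps != 0.
  by apply: contra_eq_neq heps => ->; rewrite expr0n eq_sym oppr_eq0 oner_neq0.
have epsN : eps != - eps.
  by rewrite -subr_eq0 opprK -mulr2n -mulr_natl mulf_neq0.
have /andP[e1 eN1] := not_unit _ heps.
have /andP[f1 fN1] : (- eps != 1) && (- eps != -1).
  by apply: not_unit; rewrite sqrrN.
rewrite /= !inE !negb_or !(eq_sym _ (- eps)) !(eq_sym _ eps).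
by rewrite eq_sym one_neq e1 eN1 f1 fN1 epsN.
Qed.

Lemma fourth_roots_of_unity (R : idomainType) (eps t : R) :
  eps ^+ 2 = -1 -> t ^+ 4 = 1 -> t \in [:: -1; 1; eps; - eps].
Proof.
move=> heps ht.
have : (t + 1) * (t - 1) * (t - eps) * (t + eps) = 0.
  have -> : (t + 1) * (t - 1) * (t - eps) * (t + eps)
            = t ^+ 4 - t ^+ 2 * (1 + eps ^+ 2) + eps ^+ 2 by ring.
  by rewrite ht heps; ring.
by move/eqP; rewrite !inE !mulf_eq0 !subr_eq0 !addr_eq0 -!orbA.
Qed.

Lemma mult_coefE (R : nzRingType) (i : 'I_4) :
  (mult_coef i)%:~R = nth 0 [:: -1; 1; 2; 3] i :> R.
Proof. by case: i => [[|[|[|[|i]]]] Hi]. Qed.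

Section QuarticCharacter.
(* A prime q = 8k + 5 in which -1 is a square (j) and 6 is a fourth power
   (w ^+ 4).  With e = (q - 1) / 4, y |-> y ^+ e is the quartic character of
   'F_q^*. *)
Variables (q k : nat) (q_prime : prime q) (q_eq : q = (8 * k + 5)%N).
Variables (j w : 'F_q) (hj : j ^+ 2 = -1) (hw : w ^+ 4 = 6).

Let e : nat := (2 * k + 1)%N.

Let small_neq0 (n : nat) : (0 < n < 5)%N -> n%:R != 0 :> 'F_q.
Proof. by move=> /andP[n0 n5]; apply: Fp_nat_neq0 => //; rewrite n0 q_eq; lia. Qed.

Lemma fermat_quartic (y : 'F_q) : y != 0 -> y ^+ (4 * e) = 1.
Proof.
move=> y0; have := expf_card y.
have -> : #|'F_q| = (4 * e).+1 by rewrite card_Fp // q_eq /e; lia.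
by rewrite exprS => hy; apply: (mulIf y0); rewrite mul1r mulrC.
Qed.

Lemma neg1_pow_e : (-1 : 'F_q) ^+ e = -1.
Proof. by rewrite -signr_odd /e oddD oddM /= expr1. Qed.

(* 2 is a quadratic non-residue: (2 ^+ e) ^+ 2 = -1, because (1 + j) ^+ 2 = 2 j. *)
Let eps : 'F_q := 2 ^+ e.

Lemma eps_sq : eps ^+ 2 = -1.
Proof.
have j1 : 1 + j != 0.
  apply/negP => /eqP hj1.
  have jN1 : j = -1 by apply/eqP; rewrite -addr_eq0 addrC hj1.
  move: hj; rewrite jN1 sqrrN expr1n => /eqP.
  by rewrite -subr_eq0 opprK -(natrD _ 1 1) (negbTE (small_neq0 _)).
have sq : (1 + j) ^+ 2 = 2 * j.
  by rewrite (_ : 2 * j = 1 + 2 * j + j ^+ 2); [ring | rewrite hj; ring].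
have := fermat_quartic j1; rewrite (_ : (4 * e = 2 * (2 * e))%N); last lia.
rewrite exprM sq exprMn [j ^+ _]exprM hj neg1_pow_e mulnC exprM -/eps.
by rewrite mulrN1 => /eqP; rewrite eqr_oppLR => /eqP.
Qed.

(* 3 has quartic character -eps, because 6 = 2 * 3 is a fourth power. *)
Lemma three_pow_e : 3 ^+ e = - eps.
Proof.
have w0 : w != 0.
  apply: contra_eq_neq hw => ->; rewrite expr0n eq_sym (natrM _ 2 3).
  by rewrite mulf_neq0 ?small_neq0.
have six_e : 3 ^+ e * eps = 1.
  by rewrite -exprMn -natrM -hw -exprM fermat_quartic.
have eps_inv : eps * - eps = 1 by rewrite mulrN -expr2 eps_sq opprK.
have -> : 3 ^+ e = 3 ^+ e * eps * - eps by rewrite -mulrA eps_inv mulr1.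
by rewrite six_e mul1r.
Qed.

Let chars : seq 'F_q := [:: -1; 1; eps; - eps].

Lemma uniq_chars : uniq chars.
Proof. by apply: uniq_fourth_roots; [rewrite small_neq0 | exact: eps_sq]. Qed.

Lemma mult_coef_pow_e (i : 'I_4) : (mult_coef i)%:~R ^+ e = nth 0 chars i.
Proof.
rewrite mult_coefE; case: i => [[|[|[|[|i]]]] Hi] //=.
- exact: neg1_pow_e.
- exact: expr1n.
- exact: three_pow_e.
Qed.

Lemma mult_coef_neq0 (i : 'I_4) : (mult_coef i)%:~R != 0 :> 'F_q.
Proof.
rewrite mult_coefE; case: i => [[|[|[|[|i]]]] Hi] //=.
all: by rewrite ?oppr_eq0 ?oner_neq0 ?small_neq0.
Qed.

(* The kernel of the quartic character is a perfect B[-1,3](q) set: its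
   translates by -1, 1, 2, 3 are the four cosets of the kernel. *)
Theorem perfect_quartic_kernel : perfect_Bm13 [set y : 'F_q | y ^+ e == 1].
Proof.
split=> [y y0 | ]; last first.
  rewrite /nrep (_ : [set _ | _] = set0) ?cards0 //.
  apply/setP => [[i b]]; rewrite !inE /= mulf_eq0 (negbTE (mult_coef_neq0 i)).
  by case: (b =P 0) => [->|]; rewrite ?andbF // expr0n /e addn1 eq_sym oner_eq0.
have y4 : (y ^+ e) ^+ 4 = 1 by rewrite -exprM mulnC fermat_quartic.
have ychar : (index (y ^+ e) chars < 4)%N.
  by rewrite index_mem; apply: fourth_roots_of_unity eps_sq y4.
set i0 : 'I_4 := Ordinal ychar.
have hi0 : nth 0 chars i0 = y ^+ e by rewrite nth_index // -index_mem.
have c0 := mult_coef_neq0 i0.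
rewrite /nrep (_ : [set _ | _] = [set (i0, y / (mult_coef i0)%:~R)]) ?cards1 //.
apply/setP => [[i b]]; rewrite !inE /= xpair_eqE; apply/idP/idP.
- move=> /andP[/eqP hb /eqP hy].
  have hi : i = i0.
    apply/val_inj/eqP.
    rewrite -(nth_uniq 0 (ltn_ord i : (i < size chars)%N) (ltn_ord i0) uniq_chars).
    by rewrite hi0 -mult_coef_pow_e -hy exprMn hb mulr1.
  by rewrite -hy hi eqxx [_ * b]mulrC mulfK ?eqxx.
- move=> /andP[/eqP -> /eqP ->]; rewrite [_ * (_ / _)]mulrC mulfVK // eqxx andbT.
  by rewrite exprMn exprVn mult_coef_pow_e hi0 mulfV // expf_neq0.
Qed.
End QuarticCharacter.

(* The quartic f = U^2 - 6 V^2, the norm from Q(sqrt 6) of U + V sqrt 6. *)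
Definition polU (R : nzRingType) (x : R) : R := x ^+ 4 + 86 * x ^+ 2 - 240 * x + 1465.
Definition polV (R : nzRingType) (x : R) : R := 4 * x ^+ 3 - 20 * x ^+ 2 + 124 * x - 580.
Definition polF (R : nzRingType) (x : R) : R := polU x ^+ 2 - 6 * polV x ^+ 2.

Lemma polF_rmorph (R S : nzRingType) (f : {rmorphism R -> S}) (x : R) :
  f (polF x) = polF (f x).
Proof.
have fU : f (polU x) = polU (f x).
  by rewrite /polU rmorphD rmorphB rmorphD !rmorphM !rmorph_nat.
have fV : f (polV x) = polV (f x).
  by rewrite /polV rmorphB rmorphD rmorphB !rmorphM !rmorph_nat.
by rewrite /polF rmorphB [f (6 * _)]rmorphM !rmorphXn rmorph_nat fU fV.
Qed.

Section RootsOfNormForm.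
Variables (F : fieldType) (m : F).
Hypothesis char_F : forall n : nat, (0 < n <= 71)%N -> n%:R != 0 :> F.
Hypothesis f_root : polF m = 0.

Let U := polU m.
Let V := polV m.

Let sq_eq0 (x : F) : x ^+ 2 = 0 -> x = 0.
Proof. by move/eqP; rewrite expf_eq0 => /andP[_ /eqP]. Qed.

Lemma polU_sq : U ^+ 2 = 6 * V ^+ 2.
Proof. by apply/eqP; rewrite -subr_eq0; apply/eqP. Qed.

(* U and V have no common root in characteristic 0 or > 71: eliminating m
   from U and V leaves 2^7 * 7^3 * 59. *)
Lemma polV_neq0 : V != 0.
Proof.
apply/negP => /eqP V0.
have U0 : U = 0 by apply: sq_eq0; rewrite polU_sq V0; ring.
pose r2 := 8 * m ^+ 2 - 25 * m + 219.
have r2_0 : r2 = 0.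
  have : 4 * U - (m + 5) * V = 40 * r2 by rewrite /U /V /polU /polV /r2; ring.
  rewrite U0 V0 !mulr0 subrr => /esym/eqP; rewrite mulf_eq0 (negbTE (char_F _)) //=.
  by move/eqP.
pose l := 13 * m + 545.
have l0 : l = 0.
  have : 16 * V - (8 * m - 15) * r2 = - (11 * l) by rewrite /V /polV /r2 /l; ring.
  rewrite V0 r2_0 !mulr0 subrr => /esym/eqP; rewrite oppr_eq0 mulf_eq0.
  by rewrite (negbTE (char_F _)) //= => /eqP.
have : 169 * r2 = l * (104 * m - 4685) + 2 ^+ 7 * 7 ^+ 3 * 59 by rewrite /r2 /l; ring.
rewrite r2_0 l0 mulr0 mul0r add0r => /esym/eqP; apply/negP.
by rewrite !mulf_neq0 ?expf_neq0 ?char_F.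
Qed.

Let r : F := - U / V.

Lemma r_sq : r ^+ 2 = 6.
Proof.
by rewrite /r exprMn sqrrN exprVn polU_sq mulfK // expf_neq0 // polV_neq0.
Qed.

Lemma U_plus_Vr : U + V * r = 0.
Proof. by rewrite /r mulNr mulrN mulrC divfK ?subrr // polV_neq0. Qed.

(* Modulo r ^+ 2 = 6, U + V r is a sum of two squares X ^+ 2 + Y ^+ 2. *)
Let X : F := m ^+ 2 + 29 + (2 * m - 10) * r.
Let Y : F := 2 * m + 2 * r.

Lemma X2_plus_Y2 : X ^+ 2 + Y ^+ 2 = 0.
Proof.
have -> : X ^+ 2 + Y ^+ 2
          = U + V * r + (r ^+ 2 - 6) * ((2 * m - 10) ^+ 2 + 4).
  by rewrite /X /Y /U /V /polU /polV; ring.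
by rewrite U_plus_Vr r_sq subrr mul0r addr0.
Qed.

(* Y = 0 would force m = -r and then 71 = 0. *)
Lemma Y_neq0 : Y != 0.
Proof.
apply/negP => /eqP Y0.
have X0 : X = 0.
  by apply: sq_eq0; have := X2_plus_Y2; rewrite Y0 expr0n /= addr0.
have mr : m = - r.
  apply/eqP; rewrite -addr_eq0; move: Y0; rewrite /Y -mulrDr => /eqP.
  by rewrite mulf_eq0 (negbTE (char_F _)).
have : 71 = - (29 - r ^+ 2 - 10 * r) * (10 * r + 29 - r ^+ 2)
            + (r ^+ 2 - 6) * (r ^+ 2 - 152) :> F by ring.
have -> : 29 - r ^+ 2 - 10 * r = 0 by rewrite -X0 /X mr; ring.
rewrite r_sq subrr oppr0 !mul0r addr0 => /eqP; exact/negP/char_F.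
Qed.

Let j : F := - X / Y.

Lemma j_sq : j ^+ 2 = -1.
Proof.
have X2 : X ^+ 2 = - Y ^+ 2 by apply/eqP; rewrite -addr_eq0 X2_plus_Y2.
by rewrite /j exprMn sqrrN exprVn X2 mulNr mulfV // expf_neq0 // Y_neq0.
Qed.

Lemma X_plus_jY : X + j * Y = 0.
Proof. by rewrite /j !mulNr divfK ?subrr // Y_neq0. Qed.

(* r itself is a square: (m + j + r)^2 = r (2 - r)^2. *)
Lemma r_is_square : exists s : F, s ^+ 2 = r.
Proof.
pose a := m + j + r; pose b := 2 - r.
have ab : a ^+ 2 = r * b ^+ 2.
  apply/eqP; rewrite -subr_eq0; apply/eqP.
  have -> : a ^+ 2 - r * b ^+ 2
            = X + j * Y + (j ^+ 2 + 1) + (r ^+ 2 - 6) * (5 - r).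
    by rewrite /a /b /X /Y; ring.
  by rewrite X_plus_jY j_sq r_sq addNr subrr mul0r !add0r.
have b0 : b != 0.
  apply/negP => /eqP b0; have r2 : r = 2 by apply/eqP; rewrite eq_sym -subr_eq0 -/b b0.
  have := r_sq; rewrite r2 => /eqP; rewrite -subr_eq0.
  have -> : 2 ^+ 2 - 6 = - 2 :> F by ring.
  by rewrite oppr_eq0 (negbTE (char_F _)).
by exists (a / b); rewrite exprMn exprVn ab mulfK // expf_neq0.
Qed.

Theorem norm_form_root_powers : exists j w : F, j ^+ 2 = -1 /\ w ^+ 4 = 6.
Proof.
have [s s2] := r_is_square.
by exists j, s; rewrite j_sq (_ : 4 = 2 * 2)%N // exprM s2 r_sq.
Qed.
End RootsOfNormForm.

Section IntegerPoint.
Local Open Scope Z_scope.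

Definition fZ (x : Z) : Z :=
  (x ^ 4 + 86 * x ^ 2 - 240 * x + 1465) ^ 2
  - 6 * (4 * x ^ 3 - 20 * x ^ 2 + 124 * x - 580) ^ 2.

Lemma polF_int_of_Z (z : Z) : int_of_Z (fZ z) = polF (int_of_Z z).
Proof. by rewrite /fZ /polF /polU /polV; zify; ring. Qed.

Definition gZ (x : Z) : Z :=
  159840 + 78124 * x + 16320 * x ^ 2 + 1974 * x ^ 3 + 480 * x ^ 4
  + 76 * x ^ 5 + x ^ 7.

Lemma fZ_expand (x : Z) : fZ x = 127825 + x * gZ x.
Proof. by rewrite /fZ /gZ; ring. Qed.

Lemma gZ_ge0 (x : Z) : 0 <= x -> 0 <= gZ x.
Proof.
move=> x0; have := Z.pow_nonneg x 2 x0; have := Z.pow_nonneg x 3 x0.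
have := Z.pow_nonneg x 4 x0; have := Z.pow_nonneg x 5 x0.
have := Z.pow_nonneg x 7 x0; rewrite /gZ; lia.
Qed.

Definition hZ (l : Z) : Z :=
  375 + 1468 * l + 2264 * l ^ 2 + 1912 * l ^ 3 + 1396 * l ^ 4 + 992 * l ^ 5
  + 416 * l ^ 6 + 128 * l ^ 7 + 64 * l ^ 8.

Lemma fZ_1mod4 (l : Z) : fZ (4 * l + 1) = 640 + 1024 * hZ l.
Proof. by rewrite /fZ /hZ; ring. Qed.

Definition special_point (K : nat) : Z := 127825 ^ 2 * Z.of_nat K ^ 2.

(* For odd K, f(x) = f(0) * 128 * P with P = 5 (mod 8) and P coprime to K:
   f(x) = f(0) Q with Q = 1 + f(0) K^2 g(x) = 1 (mod K), and since x = 1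
   (mod 4), f(0) Q = 640 (mod 1024), so Q = 128 P with P = 5 (mod 8). *)
Lemma special_value (K : nat) : odd K ->
  exists P : nat, [/\ (P %% 8 = 5)%N, coprime P K
                    & (Z.of_nat P | fZ (special_point K))].
Proof.
move=> oK; have [t eK] : exists t, Z.of_nat K = 2 * t + 1.
  by exists (Z.of_nat K./2); have := odd_double_half K; rewrite oK; lia.
set x := special_point K.
have x0 : 0 <= x by rewrite /x /special_point; lia.
pose c : nat := Z.to_nat (127825 * Z.of_nat K * gZ x).
have hc : Z.of_nat c = 127825 * Z.of_nat K * gZ x.
  by rewrite Z2Nat.id //; have := gZ_ge0 x0; nia.
pose Q := 1 + Z.of_nat K * Z.of_nat c.
have fQ : fZ x = 127825 * Q by rewrite /Q hc fZ_expand /x /special_point; ring.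
pose l := 127825 ^ 2 * (t ^ 2 + t) + 4084807656.
have fH : 127825 * Q = 640 + 1024 * hZ l.
  by rewrite -fQ -fZ_1mod4 /x /special_point eK /l; f_equal; ring.
pose w := 270 + 433 * hZ l - 54051 * Q.
have Qw : Q = 128 * (8 * w + 5) by rewrite /w; lia.
have w0 : 0 <= w.
  by have := Z.mul_nonneg_nonneg _ _ (Zle_0_nat K) (Zle_0_nat c); lia.
pose P : nat := Z.to_nat (8 * w + 5).
have hP : Z.of_nat P = 8 * w + 5 by rewrite Z2Nat.id; lia.
exists P; split.
- by zify; lia.
- by apply: (@coprime_of_affine 128 _ _ c); zify; lia.
- by exists (127825 * 128); rewrite fQ Qw hP; ring.
Qed.

Lemma powers_mod_prime_divisor (q : nat) (x : Z) :
  prime q -> (71 < q)%N -> (Z.of_nat q | fZ x) ->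
  exists j w : 'F_q, (j ^+ 2 = -1 /\ w ^+ 4 = 6)%R.
Proof.
move=> pq q71 [d fd]; apply: (@norm_form_root_powers _ (int_of_Z x)%:~R).
  by move=> n /andP[n0 n71]; apply: Fp_nat_neq0; rewrite // n0 /=; lia.
rewrite -(polF_rmorph intr) -polF_int_of_Z.
have -> : int_of_Z (fZ x) = (int_of_Z d * q%:R)%R by rewrite fd; zify; lia.
by rewrite rmorphM rmorph_nat pchar_Fp_0 // mulr0.
Qed.

End IntegerPoint.

Theorem mainTheorem12 :
  forall N : nat, exists p : nat,
    [/\ (N < p)%N, prime p & exists B : {set 'F_p}, perfect_Bm13 B].
Proof.
move=> N; pose M := (N + 72)%N; pose K := odd_prod M.
have [P [P5 coPK dvdP]] := special_value (odd_prod_odd M).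
(* Every prime factor q of P is coprime to K, hence at least 2M > 71, and
   modulo q the number -1 is a square and 6 is a fourth power. *)
have large q : prime q -> (q %| P)%N ->
    (2 * M <= q)%N /\ exists j w : 'F_q, j ^+ 2 = -1 /\ w ^+ 4 = 6.
  move=> pq qP; have oq : odd q by apply: dvdn_odd qP _; lia.
  have qK : ~~ (q %| K)%N by rewrite -prime_coprime // (coprime_dvdl qP coPK).
  have qM : (2 * M <= q)%N by rewrite leqNgt; apply: contra qK; apply: dvdn_odd_prod.
  split=> //; apply: powers_mod_prime_divisor => //; first lia.
  by apply: Z.divide_trans dvdP; case/dvdnP: qP => d ->; exists (Z.of_nat d); lia.
have [q [pq qP q5]] : exists q, [/\ prime q, (q %| P)%N & (q %% 8 = 5)%N].
  apply: prime_divisor_5mod8 => // q pq qP.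
  have [qM [j [_ [hj _]]]] := large q pq qP.
  by apply: sqrt_neg1_mod4 hj => //; apply: dvdn_odd qP _; lia.
have [qM [j [w [hj hw]]]] := large q pq qP.
exists q; split=> //; first lia.
exists [set y : 'F_q | y ^+ (2 * (q %/ 8) + 1) == 1].
apply: (perfect_quartic_kernel (k := q %/ 8) pq _ hj hw).
by rewrite {1}(divn_eq q 8) q5 mulnC.
Qed.
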